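(* Let $\mathcal{G}$ be a metric graph as in the context and suppose $\overline{\mathcal{G}}$ is compact. Then $\partial\overline{\mathcal{G}}$ is totally disconnected if and only if $\overline{\mathcal{G}}$ is weakly connected.
   Context: $\mathcal{G}$ is a connected, locally finite metric graph with countable vertex set and countable edge set. Each edge $e$ has a length $l_e>0$ and is identified with an interval of that length. $\mathcal{G}$ carries the geodesic distance (infimum of lengths of paths), and $\overline{\mathcal{G}}$ is its metric completion. A designated set of vertices, containing all vertices of degree $1$, forms the boundary vertices. $\mathcal{G}_{int}$ is $\mathcal{G}$ minus the boundary vertices, and $\partial\overline{\mathcal{G}}=\overline{\mathcal{G}}\setminus\mathcal{G}_{int}$. $\overline{\mathcal{G}}$ is weakly connected if for every pair of distinct points $x,y\in\overline{\mathcal{G}}$ there is a finite set $W$ of points of $\mathcal{G}$ and disjoint open subsets $U_x\ni x$, $U_y\ni y$ of $\overline{\mathcal{G}}$ with $\overline{\mathcal{G}}\setminus W=U_x\cup U_y$. *)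

From HB Require Import structures.
From mathcomp Require Import all_boot all_order all_algebra.
From mathcomp Require Import all_classical all_reals all_analysis.
From Stdlib Require Import Relations.
Set Implicit Arguments. Unset Strict Implicit. Unset Printing Implicit Defensive.
Import Order.TTheory GRing.Theory Num.Theory.
Local Open Scope classical_set_scope.
Local Open Scope ring_scope.

(* A (combinatorial skeleton of a) metric graph: vertices V, edges E,
   each edge e goes from [src e] to [tgt e] (loops / multiple edges allowed)
   and has length [l e] (> 0, imposed as a hypothesis in the theorem). *)

Section MetricGraph.
Variables (R : realType) (V E : Type) (src tgt : E -> V) (l : E -> R).

Definition incident (e : E) (v : V) : Prop := src e = v \/ tgt e = v.

(* v has degree exactly 1: exactly one edge end sits at v. *)
Definition deg1 (v : V) : Prop :=
  exists e, [/\ incident e v, src e <> tgt e &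
                forall e', incident e' v -> e' = e].

Definition adj (v w : V) : Prop :=
  exists e, (src e = v /\ tgt e = w) \/ (src e = w /\ tgt e = v).

Definition graph_connected : Prop := forall v w, clos_refl_trans V adj v w.

(* The points of the metric graph G: vertices, and interior points of edges
   (edge e identified with the interval [0, l e], 0 ~ src e, l e ~ tgt e). *)
Definition gpoint : Type := (V + {et : E * R | 0 < et.2 < l et.1})%type.

Definition on_edge (e : E) (t : R) (x : gpoint) : Prop :=
  (t = 0 /\ x = inl (src e)) \/ (t = l e /\ x = inl (tgt e)) \/
  (exists h : 0 < t < l e, x = inr (exist _ (e, t) h)).

Inductive gpath : gpoint -> gpoint -> R -> Prop :=
| gpath0 x : gpath x x 0
| gpathS x y z e s t c :
    on_edge e s x -> on_edge e t y -> gpath y z c -> gpath x z (`|s - t| + c).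

Definition gdist (x y : gpoint) : R := inf [set c | gpath x y c].

Definition G_int (B : set V) : set gpoint :=
  [set p | forall v, B v -> p <> inl v].

End MetricGraph.

(* The metric completion is represented by any complete metric space X
   (balls of X given by a genuine distance dX) together with a dense
   isometric embedding iota : G -> X. *)
Definition is_metric_completion (R : realType) (P : Type) (d : P -> P -> R)
    (X : completePseudoMetricType R) (dX : X -> X -> R) (iota : P -> X) : Prop :=
  [/\ (forall (x : X) (e : R) (y : X), ball x e y <-> dX x y < e),
      (forall x y : X, dX x y = 0 -> x = y),
      (forall p q : P, dX (iota p) (iota q) = d p q) &
      dense (range iota)].

Definition bdry_bar (P : Type) (X : Type) (Gint : set P) (iota : P -> X) : set X :=
  ~` (iota @` Gint).

Definition weakly_connected (P : Type) (X : topologicalType) (iota : P -> X) : Prop :=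
  forall x y : X, x <> y ->
    exists (W : set P) (Ux Uy : set X),
      [/\ finite_set W, open Ux /\ open Uy, Ux `&` Uy = set0,
          Ux x /\ Uy y & ~` (iota @` W) = Ux `|` Uy].

Arguments G_int [R V E] l B _.
Arguments gdist [R V E] src tgt l x y.

(* Around every point p of G the metric graph is a finite star: for small r,
   the points of the completion within r/2 of p are p itself and points of
   finitely many arms leaving p along edges (the edges at a vertex, finitely
   many by local finiteness, or the two halves of an edge at an interior
   point). Hence the image of G_int is open, boundary vertices are isolated in
   the boundary, and a point of G is cut off from any other point by the
   finitely many points at a small distance rho on its arms.
   If the completion is weakly connected, a connected subset of the boundary
   through two points must avoid the finite cut set (its points of G are
   isolated boundary vertices) and is then split by the two open sets.
   Conversely, the boundary is a closed totally disconnected subset of a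
   compact Hausdorff space, so its quasi-components are points and two boundary
   points are separated by disjoint open sets Q1, Q2 covering it. The compact
   remainder lies in G and is covered by finitely many points and open edges;
   removing those points and the end points of those edges cuts x from y. *)

From HB Require Import structures.
From mathcomp Require Import all_boot all_order all_algebra.
From mathcomp Require Import all_classical all_reals all_analysis.
From Stdlib Require Import Relations.
From mathcomp Require Import lra.
Set Implicit Arguments. Unset Strict Implicit. Unset Printing Implicit Defensive.
Import Order.TTheory GRing.Theory Num.Theory numFieldNormedType.Exports.
Local Open Scope classical_set_scope.
Local Open Scope ring_scope.

Section MinMax.
Variable R : realFieldType.

Lemma dist_min (a b c d : R) :
  `|Num.min a b - Num.min c d| <= Num.max `|a - c| `|b - d|.
Proof.
have := ler_norm (a - c); have := ler_norm (c - a).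
have := ler_norm (b - d); have := ler_norm (d - b).
rewrite ler_norml (distrC c) (distrC d).
by case: (leP `|a - c| `|b - d|); case: (leP a b); case: (leP c d) => *;
  apply/andP; split; lra.
Qed.

Lemma dist_max (a b c d : R) :
  `|Num.max a b - Num.max c d| <= Num.max `|a - c| `|b - d|.
Proof.
have := ler_norm (a - c); have := ler_norm (c - a).
have := ler_norm (b - d); have := ler_norm (d - b).
rewrite ler_norml (distrC c) (distrC d).
by case: (leP `|a - c| `|b - d|); case: (leP a b); case: (leP c d) => *;
  apply/andP; split; lra.
Qed.

Lemma dist_min_le (f g : R -> R) s t :
  `|f s - f t| <= `|s - t| -> `|g s - g t| <= `|s - t| ->
  `|Num.min (f s) (g s) - Num.min (f t) (g t)| <= `|s - t|.
Proof. by move=> hf hg; apply: le_trans (dist_min _ _ _ _) _; rewrite ge_max hf hg. Qed.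

End MinMax.

Ltac case_min := repeat match goal with
  | |- context [Order.min ?a ?b] => let h := fresh "hm" in case: (leP a b) => h
  | H : context [Order.min ?a ?b] |- _ =>
      let h := fresh "hm" in revert H; case: (leP a b) => h H
  end.

Section Paths.
Variables (R : realType) (V E : Type) (src tgt : E -> V) (l : E -> R).
Hypothesis l_gt0 : forall e, 0 < l e.

Local Notation gp := (gpoint V l).
Local Notation gpath := (gpath src tgt (l:=l)).
Local Notation on_edge := (on_edge src tgt (l:=l)).
Local Notation gdist := (gdist src tgt l).

Lemma gpath_ge0 x y c : gpath x y c -> 0 <= c.
Proof. by elim=> // {}x {}y z e s t {}c _ _ _; apply: addr_ge0. Qed.

Lemma gpath_cat x y z c1 c2 : gpath x y c1 -> gpath y z c2 -> gpath x z (c1 + c2).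
Proof.
elim=> [u|u u' u'' e s t c h1 h2 _ IH] h; first by rewrite add0r.
by rewrite -addrA; apply: gpathS h1 h2 (IH h).
Qed.

Lemma gdist_le x y c : gpath x y c -> gdist x y <= c.
Proof. by move=> h; apply: ge_inf => //; exists 0 => d /= /gpath_ge0. Qed.

Lemma lb_le_gdist x y d : (exists c, gpath x y c) ->
  (forall c, gpath x y c -> d <= c) -> d <= gdist x y.
Proof. by move=> [c hc] H; apply: lb_le_inf; [exists c|]. Qed.

Lemma gdist_xx x : gdist x x = 0.
Proof.
apply/eqP; rewrite eq_le gdist_le; last exact: gpath0.
by rewrite lb_le_gdist //; [exists 0; apply: gpath0 | exact: gpath_ge0].
Qed.

(* [clamp] extends the parametrisation of an edge to all of R, which makes
   arms below globally 1-Lipschitz maps R -> G. *)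
Definition clamp (e : E) (t : R) : R := Num.min (Num.max t 0) (l e).

Lemma clamp_ge0 e t : 0 <= clamp e t.
Proof. by rewrite le_min le_max lexx orbT (ltW (l_gt0 e)). Qed.

Lemma clamp_le e t : clamp e t <= l e.
Proof. by rewrite ge_min lexx orbT. Qed.

Lemma clamp_id e t : 0 <= t <= l e -> clamp e t = t.
Proof. by case/andP=> h1 h2; rewrite /clamp (max_idPl h1) (min_idPl h2). Qed.

Lemma clamp_dist e s t : `|clamp e s - clamp e t| <= `|s - t|.
Proof.
apply: le_trans (dist_min _ _ _ _) _; rewrite subrr normr0 ge_max normr_ge0 andbT.
by apply: le_trans (dist_max _ _ _ _) _; rewrite subrr normr0 ge_max normr_ge0 lexx.
Qed.

Definition edge_pt (e : E) (t : R) : gp :=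
  let u := clamp e t in
  match pselect (0 < u < l e) with
  | left h => inr (exist (fun et : E * R => 0 < et.2 < l et.1) (e, u) h)
  | right _ => if u <= 0 then inl (src e) else inl (tgt e)
  end.

Lemma on_edge_pt e t : on_edge e (clamp e t) (edge_pt e t).
Proof.
rewrite /edge_pt; case: pselect => [h|h]; first by right; right; exists h.
have := clamp_ge0 e t; have := clamp_le e t.
case: ifP => H a b; first by left; split => //; apply/eqP; rewrite eq_le H b.
right; left; split => //; apply/eqP; rewrite eq_le a /=.
by rewrite leNgt; apply/negP => c; apply: h; rewrite c ltNge H.
Qed.

Lemma edge_pt0 e : edge_pt e 0 = inl (src e).
Proof.
rewrite /edge_pt clamp_id; last by rewrite lexx (ltW (l_gt0 e)).
by case: pselect => [h|_]; [exfalso; move: h; rewrite ltxx | rewrite lexx].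
Qed.

Lemma edge_pt_len e : edge_pt e (l e) = inl (tgt e).
Proof.
rewrite /edge_pt clamp_id; last by rewrite lexx (ltW (l_gt0 e)).
by case: pselect => [h|_]; [exfalso; move: h; rewrite ltxx andbF | rewrite leNgt l_gt0].
Qed.

Lemma edge_pt_inner e t (h : 0 < t < l e) : edge_pt e t = inr (exist _ (e, t) h).
Proof.
have ht : clamp e t = t by apply: clamp_id; case/andP: h => *; apply/andP; split; lra.
rewrite /edge_pt ht; case: pselect => [h'|]; last by move=> /(_ h).
by congr (inr (exist _ _ _)); apply: bool_irrelevance.
Qed.

Lemma gdist_edge_pt e s t : gdist (edge_pt e s) (edge_pt e t) <= `|s - t|.
Proof.
apply: le_trans (clamp_dist e s t); apply: gdist_le; rewrite -[X in gpath _ _ X]addr0.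
exact: gpathS (on_edge_pt e s) (on_edge_pt e t) (gpath0 _ _ _).
Qed.

Hypothesis G_connected : graph_connected src tgt.

Lemma gpath_vertices (w v : V) : exists c, gpath (inl w) (inl v) c.
Proof.
have := clos_rt_rt1n _ _ _ _ (G_connected w v).
elim=> {w v} [w|u w v [e He] _ [c hc]].
  by exists 0; apply: gpath0.
case: He => -[] [hs ht]; subst u w.
- by exists (`|0 - l e| + c); apply: gpathS hc; [left | right; left].
- by exists (`|l e - 0| + c); apply: gpathS hc; [right; left | left].
Qed.

Lemma gpath_to_vertex (x : gp) v : exists c, gpath x (inl v) c.
Proof.
case: x => [w|[[e t] h]]; first exact: gpath_vertices.
have [c hc] := gpath_vertices (src e) v.
by exists (`|t - 0| + c); apply: gpathS hc; [right; right; exists h | left].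
Qed.

Lemma gpath_exists (x y : gp) : exists c, gpath x y c.
Proof.
case: y => [v|[[e t] h]]; first exact: gpath_to_vertex.
have [c hc] := gpath_to_vertex x (src e).
exists (c + (`|0 - t| + 0)); apply: gpath_cat hc _.
by apply: gpathS (gpath0 _ _ _); [left | right; right; exists h].
Qed.

End Paths.

Section Stars.
Variables (R : realType) (V E : Type) (src tgt : E -> V) (l : E -> R).
Hypothesis l_gt0 : forall e, 0 < l e.

Local Notation gp := (gpoint V l).
Local Notation gpath := (gpath src tgt (l:=l)).
Local Notation on_edge := (on_edge src tgt (l:=l)).
Local Notation gdist := (gdist src tgt l).
Local Notation edge_pt := (edge_pt src tgt l).

(* An arm (e, t, u), with u = 1 or u = -1, leaves the point of parameter t
   of edge e in the direction u. *)
Definition arm_pt (a : E * R * R) (s : R) : gp := edge_pt a.1.1 (a.1.2 + a.2 * s).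

(* [d] certifies that the ball of radius r around p is the star formed by the
   arms: it is 1-Lipschitz along edges, hence below gdist _ p, and it
   measures the arm parameter. *)
Record star (p : gp) (r : R) (d : gp -> R) (arms : set (E * R * R)) : Prop := {
  star_radius_gt0 : 0 < r;
  star_lipschitz : forall e s t x y,
    on_edge e s x -> on_edge e t y -> d x <= d y + `|s - t|;
  star_center : d p = 0;
  star_cover : forall q, d q < r ->
    q = p \/ exists2 a, arms a & 0 < d q /\ q = arm_pt a (d q);
  star_arm_dir : forall a, arms a -> a.2 = 1 \/ a.2 = -1;
  star_arm_base : forall a, arms a -> edge_pt a.1.1 a.1.2 = p;
  star_arm_inner : forall a s, arms a -> 0 < s < r ->
    0 < a.1.2 + a.2 * s < l a.1.1;
  star_arm_dist : forall a s, arms a -> 0 <= s < r -> d (arm_pt a s) = s }.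

Section StarDist.
Variables (p : gp) (r : R) (d : gp -> R) (arms : set (E * R * R)).
Hypothesis hstar : star p r d arms.

Lemma star_le_gpath x c : gpath x p c -> d x <= c.
Proof.
move: {1 3}p (erefl p) => q eq h; elim: h eq => [u ->|u y z e s t c' h1 h2 _ IH eq].
  by rewrite (star_center hstar).
rewrite addrC; apply: le_trans (star_lipschitz hstar h1 h2) _.
by rewrite lerD2r IH.
Qed.

Hypothesis G_connected : graph_connected src tgt.

Lemma star_le_gdist x : d x <= gdist x p.
Proof. by apply: lb_le_gdist; [exact: gpath_exists | exact: star_le_gpath]. Qed.

Lemma gdist_arm_pt a s : arms a -> 0 <= s < r -> gdist (arm_pt a s) p = s.
Proof.
move=> ha hs; apply/eqP; rewrite eq_le; apply/andP; split; last first.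
  by rewrite -{1}(star_arm_dist hstar ha hs) star_le_gdist.
rewrite -(star_arm_base hstar ha) /arm_pt; apply: le_trans (gdist_edge_pt _ _ l_gt0 _ _ _) _.
case/andP: hs => hs _; rewrite addrAC subrr add0r.
by case: (star_arm_dir hstar ha) => ->; rewrite ?mul1r ?mulN1r ?normrN ger0_norm.
Qed.

End StarDist.

Section VertexStar.
Variables (v : V) (r : R).
Hypothesis r_gt0 : 0 < r.
Hypothesis r_small : forall e, incident src tgt e v -> 2 * r <= l e.

Definition vdist_edge (e : E) (s : R) : R :=
  Num.min r (Num.min (if `[< src e = v >] then s else r)
                     (if `[< tgt e = v >] then l e - s else r)).

Definition vdist (q : gp) : R :=
  match q with
  | inl w => if `[< w = v >] then 0 else r
  | inr et => vdist_edge (sval et).1 (sval et).2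
  end.

Definition vertex_arms : set (E * R * R) :=
  [set a | exists2 e, incident src tgt e v &
     (src e = v /\ a = (e, 0, 1)) \/ (tgt e = v /\ a = (e, l e, -1))].

Ltac case_ends e := have := r_gt0;
  case: (asboolP (src e = v)) => hs; case: (asboolP (tgt e = v)) => ht;
  try (have := r_small (or_introl hs)); try (have := r_small (or_intror ht)); intros.

Lemma vdist_on_edge e s x : on_edge e s x -> vdist x = vdist_edge e s.
Proof.
move=> hx; have := l_gt0 e; case: hx => [[-> ->]|[[-> ->]|[h ->]]] //= ?;
  rewrite /vdist_edge; case_ends e; case_min; lra.
Qed.

Lemma vdist_edge_dist e s t : `|vdist_edge e s - vdist_edge e t| <= `|s - t|.
Proof.
apply: (@dist_min_le _ (fun=> r) (fun s => Num.min _ _)).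
  by rewrite subrr normr0 normr_ge0.
apply: (@dist_min_le _ (fun s => if _ then s else r) (fun s => if _ then l e - s else r)).
  by case: ifP => _; rewrite ?subrr ?normr0 ?normr_ge0.
case: ifP => _; rewrite ?subrr ?normr0 ?normr_ge0 //.
by rewrite opprB addrC addrA subrK distrC.
Qed.

Lemma vdist_edge_lt e t : 0 < t < l e -> vdist_edge e t < r ->
  (src e = v /\ vdist_edge e t = t) \/ (tgt e = v /\ vdist_edge e t = l e - t).
Proof.
move=> /andP[h1 h2]; rewrite /vdist_edge; case_ends e; case_min;
  first [ lra | left; split; [done | lra] | right; split; [done | lra] ].
Qed.

Lemma vdist_arm e s : 0 <= s < r -> incident src tgt e v ->
  (src e = v -> vdist_edge e s = s) /\ (tgt e = v -> vdist_edge e (l e - s) = s).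
Proof.
move=> /andP[s0 sr] hi; have := r_small hi; have := r_gt0 => ? ?.
by split=> h; rewrite /vdist_edge (asboolT h); case: ifP => _; case_min; lra.
Qed.

Lemma star_vertex : star (inl v) r vdist vertex_arms.
Proof.
split => //.
- move=> e s t x y /vdist_on_edge -> /vdist_on_edge ->.
  by have := vdist_edge_dist e s t; rewrite ler_norml => /andP[? ?]; lra.
- by rewrite /= asboolT.
- case=> [w|[[e t] h]] /=.
    by case: (asboolP (w = v)) => [-> _|_]; [left | rewrite ltxx].
  move=> /(vdist_edge_lt h) [[hs ->]|[ht ->]]; right; case/andP: (h) => /= ? ?.
  + exists (e, 0, 1); first by exists e; left.
    by split=> //; rewrite /arm_pt /= add0r mul1r (edge_pt_inner _ _ h).
  + exists (e, l e, -1); first by exists e; right.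
    rewrite subr_gt0; split=> //.
    by rewrite /arm_pt /= mulN1r opprB addrC subrK (edge_pt_inner _ _ h).
- by move=> a [e _ [[_ ->]|[_ ->]]]; [left | right].
- by move=> a [e _ [[hs ->]|[ht ->]]] /=; rewrite ?edge_pt0 ?edge_pt_len ?hs ?ht.
- move=> a s [e hi [[_ ->]|[_ ->]]] /= /andP[s0 sr]; have := r_small hi;
    rewrite ?add0r ?mul1r ?mulN1r => ?; apply/andP; split; lra.
- move=> a s [e hi [[hs ->]|[ht ->]]] hs'; have /andP[s0 sr] := hs';
    have := r_small hi => hle; rewrite /arm_pt /=.
  + rewrite add0r mul1r (vdist_on_edge (on_edge_pt _ _ l_gt0 e s)) clamp_id;
      last by apply/andP; split; lra.
    by case: (vdist_arm hs' hi) => /(_ hs).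
  + rewrite mulN1r (vdist_on_edge (on_edge_pt _ _ l_gt0 e _)) clamp_id;
      last by apply/andP; split; lra.
    by case: (vdist_arm hs' hi) => _ /(_ ht).
Qed.

Lemma vertex_arms_finite :
  finite_set [set e | incident src tgt e v] -> finite_set vertex_arms.
Proof.
move=> hf; apply: (@sub_finite_set _ _
  ((fun e => (e, 0, 1)) @` [set e | incident src tgt e v] `|`
   (fun e => (e, l e, -1)) @` [set e | incident src tgt e v])).
  by move=> a [e hi [[_ ->]|[_ ->]]]; [left|right]; exists e.
by rewrite finite_setU; split; apply: finite_image.
Qed.

End VertexStar.

Lemma finite_edges_length_lb (A : set E) : finite_set A ->
  exists2 r : R, 0 < r & forall e, A e -> 2 * r <= l e.
Proof.
move=> /(@finite_seqP {classic E} A).1 [s ->].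
elim: s => [|e s [r hr H]]; first by exists 1 => //= e; rewrite in_nil.
exists (Num.min r (l e / 2)); first by rewrite lt_min hr /= divr_gt0.
move=> e' /=; rewrite in_cons => /orP[/eqP ->|/H ?];
  have := l_gt0 e => ?; case_min; lra.
Qed.

Section InnerStar.
Variables (e0 : E) (t0 : R) (h0 : 0 < t0 < l e0).

Local Notation p0 := (inr (exist _ (e0, t0) h0) : gp).

Definition inner_radius : R := Num.min t0 (l e0 - t0).

Definition idist_edge (e : E) (s : R) : R :=
  if `[< e = e0 >] then Num.min inner_radius `|s - t0| else inner_radius.

Definition idist (q : gp) : R :=
  match q with
  | inl _ => inner_radius
  | inr et => idist_edge (sval et).1 (sval et).2
  end.

Definition inner_arms : set (E * R * R) := [set (e0, t0, 1); (e0, t0, -1)].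

Lemma inner_radius_gt0 : 0 < inner_radius.
Proof. by case/andP: h0 => ? ?; rewrite lt_min subr_gt0; apply/andP. Qed.

Lemma inner_radius_le : inner_radius <= t0 /\ inner_radius <= l e0 - t0.
Proof. by split; rewrite ge_min lexx ?orbT. Qed.

Lemma idist_on_edge e s x : on_edge e s x -> idist x = idist_edge e s.
Proof.
rewrite /idist_edge; case: (asboolP (e = e0)) => [->|hne]; last first.
  by case=> [[_ ->]|[[_ ->]|[h ->]]] //=; rewrite /idist_edge asboolF.
have [? ?] := inner_radius_le; have := h0 => /andP[? ?].
case=> [[-> ->]|[[-> ->]|[h ->]]] //=; rewrite /idist_edge ?asboolT //.
  by rewrite sub0r normrN gtr0_norm //; case_min; lra.
by rewrite gtr0_norm ?subr_gt0 //; case_min; lra.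
Qed.

Lemma idist_edge_dist e s t : `|idist_edge e s - idist_edge e t| <= `|s - t|.
Proof.
rewrite /idist_edge; case: ifP => _; last by rewrite subrr normr0.
apply: (@dist_min_le _ (fun=> inner_radius) (fun s => `|s - t0|)).
  by rewrite subrr normr0.
by apply: le_trans (ler_dist_dist _ _) _; rewrite opprB addrA subrK.
Qed.

Lemma idist_arm (a : R) s : 0 <= s < inner_radius -> (a = 1 \/ a = -1) ->
  idist_edge e0 (clamp l e0 (t0 + a * s)) = s.
Proof.
have [? ?] := inner_radius_le; move=> /andP[s0 sr] ha.
have hs : 0 <= t0 + a * s <= l e0.
  by case: ha => ->; rewrite ?mul1r ?mulN1r; apply/andP; split; lra.
rewrite clamp_id // /idist_edge asboolT // addrAC subrr add0r.
by case: ha => ->; rewrite ?mul1r ?mulN1r ?normrN ger0_norm //; case_min; lra.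
Qed.

Lemma star_inner : star p0 inner_radius idist inner_arms.
Proof.
have hri := inner_radius_gt0; have [? ?] := inner_radius_le.
have := h0 => /andP[? ?].
split => //.
- move=> e s t x y /idist_on_edge -> /idist_on_edge ->.
  by have := idist_edge_dist e s t; rewrite ler_norml => /andP[? ?]; lra.
- by rewrite /= /idist_edge asboolT // subrr normr0; case_min; lra.
- case=> [w|[[e t] h]] /=; first by rewrite ltxx.
  rewrite /idist_edge; case: (asboolP (e = e0)) => [he|_]; last by rewrite ltxx.
  subst e => hlt; have ht : `|t - t0| < inner_radius by move: hlt; case_min; lra.
  rewrite (min_idPr (ltW ht)); case: (ltgtP t t0) => htt.
  + right; exists (e0, t0, -1); first by right.
    rewrite ltr0_norm ?subr_lt0 // opprB subr_gt0; split => //.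
    by rewrite /arm_pt /= mulN1r opprB addrC subrK (edge_pt_inner _ _ h).
  + right; exists (e0, t0, 1); first by left.
    rewrite gtr0_norm ?subr_gt0 //; split => //.
    by rewrite /arm_pt /= mul1r addrC subrK (edge_pt_inner _ _ h).
  + by left; subst t; congr (inr (exist _ _ _)); apply: bool_irrelevance.
- by move=> a [->|->]; [left | right].
- by move=> a [->|->]; apply: edge_pt_inner.
- move=> a s [->|->] /andP[? ?] /=; rewrite ?mul1r ?mulN1r; apply/andP; split; lra.
- move=> a s [->|->] hs; rewrite /arm_pt /= (idist_on_edge (on_edge_pt _ _ l_gt0 _ _));
    apply: idist_arm => //; by [left | right].
Qed.

End InnerStar.

Hypothesis locally_finite : forall v, finite_set [set e | incident src tgt e v].

Lemma star_exists (p : gp) :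
  exists r d arms, star p r d arms /\ finite_set arms.
Proof.
case: p => [v|[[e0 t0] h0]].
  have [r r_gt0 r_small] := finite_edges_length_lb (locally_finite v).
  exists r, (vdist v r), (vertex_arms v); split; first exact: star_vertex.
  exact: vertex_arms_finite.
exists (inner_radius e0 t0), (idist e0 t0), (inner_arms e0 t0).
by split; [exact: star_inner | exact: finite_set2].
Qed.

End Stars.

Section GeneralTopology.
Variable T : topologicalType.

Lemma compact_local_union (K : set T) (P : set T -> Prop) :
  compact K -> P set0 -> (forall A B, P A -> P B -> P (A `|` B)) ->
  (forall x, K x -> exists2 A, P A & nbhs x A) -> exists2 A, P A & K `<=` A.
Proof.
move=> cK P0 PU Ploc; apply: contrapT => noA.
have FF : ProperFilter (filter_from P (fun A => K `\` A)).
  apply: filter_from_proper; last first.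
    move=> A PA; apply/set0P/eqP => KA; apply: noA; exists A => // x Kx.
    by apply: contrapT => Ax; have : (K `\` A) x by []; rewrite KA.
  apply: filter_from_filter; first by exists set0.
  move=> A B PA PB; exists (A `|` B); first exact: PU.
  by move=> x [Kx /not_orP[? ?]].
have FK : filter_from P (fun A => K `\` A) K by exists set0 => // x [].
have [c [Kc cc]] := cK _ FF FK; have [A PA Ac] := Ploc c Kc.
have FKA : filter_from P (fun A => K `\` A) (K `\` A) by exists A.
by have [z [[_ nAz] Az]] := cc _ _ FKA Ac.
Qed.

Lemma normal_separation (A B : set T) : normal_space T ->
  closed A -> closed B -> A `&` B = set0 ->
  exists U V, [/\ open U, open V, A `<=` U, B `<=` V & U `&` V = set0].
Proof.
move=> nT cA cB /disjoints_subset AB.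
have [N AN NB] : exists2 N, set_nbhs A N & closure N `<=` ~` B.
  apply: nT => // a Aa; apply: open_nbhs_nbhs; split; [exact: closed_openC | exact: AB].
exists N°, (~` closure N); split.
- exact: open_interior.
- exact/closed_openC/closed_closure.
- by move=> a /AN.
- by move=> b Bb /NB.
- by apply/disjoints_subset => z /interior_subset /subset_closure Nz; apply.
Qed.

End GeneralTopology.

Section QuasiComponent.
Variables (T : topologicalType) (S : set T).

Definition separation (x : T) (P : set T * set T) :=
  [/\ open P.1, open P.2, P.1 `&` P.2 = set0, S `<=` P.1 `|` P.2 & P.1 x].

Definition quasi_component (x : T) : set T :=
  S `&` \bigcap_(P in separation x) ~` P.2.

Lemma separation_trivial x : separation x (setT, set0).
Proof. by split=> //=; [exact: openT | exact: open0 | rewrite setI0 | move=> ? _; left]. Qed.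

Lemma separation_refine x P U V :
  separation x P -> open U -> open V -> U `&` V = set0 ->
  S `&` P.1 `<=` U `|` V -> U x -> separation x (P.1 `&` U, P.2 `|` V).
Proof.
case=> o1 o2 d12 cov Px oU oV dUV SUV Ux; split=> //=.
- exact: openI.
- exact: openU.
- apply/seteqP; split=> // z [[z1 zU] [z2|zV]].
    by rewrite -d12; split.
  by rewrite -dUV; split.
- move=> z Sz; case: (cov z Sz) => [z1|z2]; last by right; left.
  by case: (SUV z (conj Sz z1)) => [zU|zV]; [left | right; right].
Qed.

Lemma separationI x P P' : separation x P -> separation x P' ->
  separation x (P.1 `&` P'.1, P.2 `|` P'.2).
Proof.
move=> hP [oP1 oP2 dP cov P'x]; apply: separation_refine => //.
by move=> z [Sz _]; apply: cov.
Qed.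

Lemma quasi_component_closed x : closed S -> closed (quasi_component x).
Proof.
move=> cS; apply: closedI => //; apply: closed_bigI => P [_ o2 _ _ _].
exact: open_closedC.
Qed.

Lemma quasi_component_refl x : S x -> quasi_component x x.
Proof. by move=> Sx; split=> // P [_ _ /disjoints_subset d12 _ /d12]. Qed.

Lemma quasi_component_sub x P : separation x P -> quasi_component x `<=` P.1.
Proof. by move=> hP z [Sz Qz]; case: (hP) => _ _ _ /(_ z Sz) [] // /(Qz P hP). Qed.

Hypotheses (T_hausdorff : hausdorff_space T) (T_compact : compact [set: T]).
Hypothesis S_closed : closed S.

Let S_compact : compact S := subclosed_compact S_closed T_compact (@subsetT _ S).

Lemma separation_sub_open x W : open W -> quasi_component x `<=` W ->
  exists2 P, separation x P & S `&` P.1 `<=` W.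
Proof.
move=> oW QW.
pose covered A := exists2 P, separation x P & A `&` P.1 `<=` W.
have covered0 : covered set0 by exists (setT, set0); [exact: separation_trivial | move=> ? []].
have coveredU A B : covered A -> covered B -> covered (A `|` B).
  move=> [P hP AP] [P' hP' BP']; exists (P.1 `&` P'.1, P.2 `|` P'.2).
    exact: separationI.
  by move=> z [[Az|Bz] [z1 z1']]; [apply: AP | apply: BP'].
have coveredloc s : S s -> exists2 A, covered A & nbhs s A.
  move=> Ss; case: (pselect (W s)) => Ws.
    by exists W; [exists (setT, set0); [exact: separation_trivial | move=> ? []] |
                  apply: open_nbhs_nbhs].
  have [P hP P2s] : exists2 P, separation x P & P.2 s.
    apply: contrapT => noP; apply: Ws; apply: QW; split=> // P hP P2s.
    by apply: noP; exists P.
  have [_ o2 /disjoints_subset d12 _ _] := hP.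
  exists P.2; last exact: open_nbhs_nbhs.
  by exists P => // z [z2 /d12].
have [A [P hP AP] SA] := compact_local_union S_compact covered0 coveredU coveredloc.
by exists P => // z [/SA Az P1z]; apply: AP.
Qed.

Lemma quasi_component_sub_open x U V : open U -> open V -> U `&` V = set0 ->
  quasi_component x `<=` U `|` V -> U x -> quasi_component x `<=` U.
Proof.
move=> oU oV dUV QUV Ux; have [P hP SP] := separation_sub_open (openU oU oV) QUV.
by move=> z /(quasi_component_sub (separation_refine hP oU oV dUV SP Ux)) [].
Qed.

Lemma quasi_component_connected x : S x -> connected (quasi_component x).
Proof.
move=> Sx B [b Bb] [C1 oC1 BC1] [C2 cC2 BC2].
set Q := quasi_component x; set A := Q `&` ~` C1.
have cQ : closed Q by exact: quasi_component_closed.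
have cA : closed A by apply: closedI => //; exact: open_closedC.
have cB : closed B by rewrite BC2; exact: closedI.
have dAB : A `&` B = set0 by rewrite BC1; apply/seteqP; split=> // z [[_ nC1z] [_ /nC1z []]].
have [U [V [oU oV AU BV dUV]]] :=
  normal_separation (compact_normal T_hausdorff T_compact) cA cB dAB.
have QUV : Q `<=` U `|` V.
  by move=> z Qz; case: (pselect (C1 z)) => C1z;
    [right; apply: BV; rewrite BC1 | left; apply: AU].
have Qb : Q b by move: Bb; rewrite BC1 => -[].
have UnV := (disjoints_subset _ _).1 dUV.
case: (QUV x (quasi_component_refl Sx)) => [Ux|Vx].
  by have := UnV b (quasi_component_sub_open oU oV dUV QUV Ux Qb) (BV b Bb).
have QV : Q `<=` V.
  by apply: quasi_component_sub_open oV oU _ _ Vx; [rewrite setIC | rewrite setUC].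
rewrite BC1; apply/seteqP; split=> [z []//|z Qz]; split=> //.
by apply: contrapT => nC1z; apply: (UnV z (AU z (conj Qz nC1z))); apply: QV.
Qed.

Lemma totally_disconnected_separation x y : totally_disconnected S ->
  S x -> S y -> x <> y ->
  exists U V, [/\ open U, open V, U `&` V = set0, S `<=` U `|` V & U x /\ V y].
Proof.
move=> tdS Sx Sy xy; case: (pselect (quasi_component x y)) => [Qy|nQy].
  have : connected_component S x y.
    exists (quasi_component x) => //; split; first exact: quasi_component_refl.
      by move=> z [].
    exact: quasi_component_connected.
  by rewrite tdS // => /esym.
have [P hP P2y] : exists2 P, separation x P & P.2 y.
  apply: contrapT => noP; apply: nQy; split=> // P hP P2y.
  by apply: noP; exists P.
by case: hP => *; exists P.1, P.2.
Qed.

End QuasiComponent.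

Lemma ball_lipschitz_continuous (R : realType) (X : pseudoMetricType R) (f : R -> X) :
  (forall s t e, `|s - t| < e -> ball (f s) e (f t)) -> continuous f.
Proof.
move=> H x; apply/cvg_ballP => eps eps_gt0; near=> y; apply: H.
by near: y; apply/nbhs_ballP; exists eps.
Unshelve. all: by end_near. Qed.

Section Completion.
Variables (R : realType) (V E : Type) (src tgt : E -> V) (l : E -> R).
Hypothesis l_gt0 : forall e, 0 < l e.
Hypothesis G_connected : graph_connected src tgt.
Variables (X : completePseudoMetricType R) (dX : X -> X -> R) (iota : gpoint V l -> X).
Hypothesis completion : is_metric_completion (gdist src tgt l) dX iota.

Local Notation gp := (gpoint V l).
Local Notation gdist := (gdist src tgt l).
Local Notation edge_pt := (edge_pt src tgt l).
Local Notation arm_pt := (arm_pt src tgt l).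

Lemma dX_ball x e y : ball x e y <-> dX x y < e.
Proof. by case: completion => h _ _ _; apply: h. Qed.

Lemma dX_iota p q : dX (iota p) (iota q) = gdist p q.
Proof. by case: completion => _ _ h _; apply: h. Qed.

Lemma dX_eq0 x y : dX x y = 0 -> x = y.
Proof. by case: completion => _ h _ _; apply: h. Qed.

Lemma open_dX_lt x e : open [set w | dX x w < e].
Proof.
rewrite openE => w /= hw; apply/nbhs_ballP.
exists ((e - dX x w) / 2) => /=; first by move: hw; lra.
move=> w' /= ww'; have xw : ball x (dX x w + (e - dX x w) / 2) w.
  by apply/dX_ball; move: hw; lra.
by move/dX_ball: (ball_triangle xw ww'); move: hw; lra.
Qed.

Lemma dense_iota z e : 0 < e -> exists p, dX z (iota p) < e.
Proof.
move=> e_gt0; case: completion => _ _ _ dense_range.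
have zz : dX z z < e by apply/dX_ball/ballxx.
have [w [/= zw [p _ pw]]] := dense_range _ (ex_intro _ z zz) (open_dX_lt z e).
by exists p; rewrite pw.
Qed.

(* Nonnegativity is not part of [is_metric_completion]: it comes from
   gdist p p = 0 at a point iota p close to x. *)
Lemma dX_ge0 x y : 0 <= dX x y.
Proof.
rewrite leNgt; apply/negP => xy_lt0.
have [p hp] : exists p, dX x (iota p) < - dX x y / 2 by apply: dense_iota; lra.
have px : ball (iota p) (- dX x y / 2) x by apply/ball_sym/dX_ball.
have xy : ball x (dX x y / 2) y by apply/dX_ball; lra.
have xp : ball x (- dX x y / 2) (iota p) by apply/dX_ball.
move/dX_ball: (ball_triangle (ball_triangle (ball_triangle px xy) (ball_sym xy)) xp).
by rewrite dX_iota gdist_xx; lra.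
Qed.

Lemma dX_sym x y : dX x y = dX y x.
Proof.
by apply/eqP; rewrite eq_le; apply/andP; split; apply/ler_addgt0Pr => e e_gt0;
  apply/ltW/dX_ball/ball_sym/dX_ball; rewrite ltrDl.
Qed.

Lemma dX_triangle x y z : dX x z <= dX x y + dX y z.
Proof.
apply/ler_addgt0Pr => e e_gt0; apply/ltW/dX_ball.
have xy : ball x (dX x y + e / 2) y by apply/dX_ball; lra.
have yz : ball y (dX y z + e / 2) z by apply/dX_ball; lra.
by apply: le_ball (ball_triangle xy yz); rewrite addrACA -splitr.
Qed.

Lemma dX_xx x : dX x x = 0.
Proof.
apply/eqP; rewrite eq_le dX_ge0 andbT; apply/ler_addgt0Pr => e e_gt0.
by rewrite add0r; apply/ltW/dX_ball/ballxx.
Qed.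

Lemma dX_gt0 x y : x <> y -> 0 < dX x y.
Proof. by move=> xy; rewrite lt_neqAle dX_ge0 andbT; apply/eqP => /esym/dX_eq0. Qed.

Lemma open_dX_gt x e : open [set w | e < dX x w].
Proof.
rewrite openE => w /= hw; apply/nbhs_ballP; exists (dX x w - e) => /=.
  by rewrite subr_gt0.
move=> w' /= /dX_ball ww'; have := dX_triangle x w' w; rewrite (dX_sym w' w); lra.
Qed.

Lemma completion_hausdorff : hausdorff_space X.
Proof.
rewrite ball_hausdorff => a b /eqP /dX_gt0 ab.
exists (PosNum (divr_gt0 ab (ltr0n _ 2)), PosNum (divr_gt0 ab (ltr0n _ 2))) => /=.
apply/eqP/seteqP; split=> // w [/dX_ball aw /dX_ball bw].
by have := dX_triangle a w b; rewrite (dX_sym w b); lra.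
Qed.

Lemma finite_set_closed (A : set X) : finite_set A -> closed A.
Proof.
exact: accessible_finite_set_closed.1 (hausdorff_accessible completion_hausdorff) A.
Qed.

Definition arm_map (a : E * R * R) (s : R) : X := iota (arm_pt a s).

Lemma arm_map_continuous a : a.2 = 1 \/ a.2 = -1 -> continuous (arm_map a).
Proof.
move=> a_dir; apply: ball_lipschitz_continuous => s t e st; apply/dX_ball.
rewrite dX_iota; apply: le_lt_trans (gdist_edge_pt _ _ l_gt0 _ _ _) _.
by case: a_dir => ->; rewrite ?mul1r ?mulN1r opprD addrACA subrr add0r // opprK
  addrC distrC.
Qed.

Lemma compact_arm_segment a c : a.2 = 1 \/ a.2 = -1 -> compact (arm_map a @` `[0, c]).
Proof.
move=> a_dir; apply: continuous_compact; last exact: segment_compact.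
by apply: continuous_subspaceT; apply: arm_map_continuous.
Qed.

Section StarImage.
Variables (p : gp) (r : R) (d : gp -> R) (arms : set (E * R * R)).
Hypotheses (hstar : star src tgt p r d arms) (arms_finite : finite_set arms).

Definition star_image (c : R) : set X :=
  [set iota p] `|` \bigcup_(a in arms) arm_map a @` `[0, c].

Lemma closed_star_image c : closed (star_image c).
Proof.
apply: closedU; first by apply: finite_set_closed; exact: finite_set1.
apply: (@closed_bigcup _ {classic (E * R * R)}) => // a ha.
apply: compact_closed; first exact: completion_hausdorff.
exact/compact_arm_segment/(star_arm_dir hstar).
Qed.

(* z is a limit of points of G within 3r/4 of p, which lie on the closed
   set star_image (3r/4). *)
Lemma star_image_near z : dX (iota p) z < r / 2 -> star_image (3 * r / 4) z.
Proof.
move=> pz; have r_gt0 := star_radius_gt0 hstar.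
have /closure_id -> := @closed_star_image (3 * r / 4).
move=> B /nbhs_ballP [eps /= eps_gt0 epsB].
have [q zq] : exists q, dX z (iota q) < Num.min eps (r / 4).
  by apply: dense_iota; rewrite lt_min eps_gt0 /=; lra.
have qp : gdist q p < 3 * r / 4.
  rewrite -dX_iota; apply: le_lt_trans (dX_triangle _ z _) _.
  by rewrite (dX_sym (iota q)) (dX_sym z (iota p)); move: zq; case_min; lra.
have dq := star_le_gdist hstar G_connected q.
exists (iota q); split; last by apply/epsB/dX_ball; move: zq; case_min; lra.
have [->|[a ha [dq_gt0 ->]]] : q = p \/ exists2 a, arms a & 0 < d q /\ q = arm_pt a (d q).
- by apply: (star_cover hstar); lra.
- by left.
right; exists a => //; exists (d q) => //.
by rewrite /= in_itv /=; apply/andP; split; lra.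
Qed.

Lemma star_near z : dX (iota p) z < r / 2 -> z = iota p \/
  exists2 a, arms a & exists s, [/\ 0 < s < r / 2, z = arm_map a s & dX (iota p) z = s].
Proof.
move=> pz; have r_gt0 := star_radius_gt0 hstar.
case: (star_image_near pz) => [->|[a ha [s]]]; first by left.
rewrite /= in_itv /= => /andP[s0 s1] sz; subst z.
have ps : dX (iota p) (arm_map a s) = s.
  rewrite /arm_map dX_sym dX_iota (gdist_arm_pt l_gt0 hstar G_connected ha) //.
  by apply/andP; split; lra.
rewrite ps in pz.
case: (ltrgt0P s) => [s_gt0|s_lt0|s_eq0]; first by right; exists a => //; exists s;
  split=> //; apply/andP; split; lra.
- by exfalso; lra.
- by left; rewrite /arm_map /arm_pt s_eq0 mulr0 addr0 (star_arm_base hstar ha).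
Qed.

End StarImage.

End Completion.

Section Boundary.
Variables (R : realType) (V E : Type) (src tgt : E -> V) (l : E -> R).
Hypothesis l_gt0 : forall e, 0 < l e.
Hypothesis locally_finite : forall v, finite_set [set e | incident src tgt e v].
Hypothesis G_connected : graph_connected src tgt.
Variables (X : completePseudoMetricType R) (dX : X -> X -> R) (iota : gpoint V l -> X).
Hypothesis completion : is_metric_completion (gdist src tgt l) dX iota.
Variable B : set V.

Local Notation gp := (gpoint V l).
Local Notation edge_pt := (edge_pt src tgt l).
Local Notation arm_pt := (arm_pt src tgt l).
Local Notation arm_map := (arm_map src tgt iota).
Local Notation bdry := (bdry_bar (G_int l B) iota).

Definition open_edge (e : E) : set X := (fun t => iota (edge_pt e t)) @` `]0, l e[.
Definition closed_edge (e : E) : set X := (fun t => iota (edge_pt e t)) @` `[0, l e].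

Definition weak_cut (x y : X) : Prop :=
  exists (W : set gp) (Ux Uy : set X),
    [/\ finite_set W, open Ux /\ open Uy, Ux `&` Uy = set0,
        Ux x /\ Uy y & ~` (iota @` W) = Ux `|` Uy].

Lemma weak_cut_sym x y : weak_cut x y -> weak_cut y x.
Proof.
case=> W [Ux [Uy [fW [oUx oUy] dU [Ux_x Uy_y] cov]]].
by exists W, Uy, Ux; split; rewrite 1?setIC 1?setUC.
Qed.

Lemma arm_map_open_edge (p : gp) r d arms a s : star src tgt p r d arms -> arms a ->
  0 < s < r -> open_edge a.1.1 (arm_map a s).
Proof.
move=> hstar ha hs; exists (a.1.2 + a.2 * s) => //.
by rewrite /= in_itv /=; apply: (star_arm_inner hstar).
Qed.

Lemma near_open_edges p : exists2 eps, 0 < eps & exists2 Es : set E, finite_set Es &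
  forall z, dX (iota p) z < eps -> z = iota p \/ exists2 e, Es e & open_edge e z.
Proof.
have [r [d [arms [hstar fin]]]] := star_exists l_gt0 locally_finite p.
have r_gt0 := star_radius_gt0 hstar.
exists (r / 2); first by lra.
exists ((fun a : E * R * R => a.1.1) @` arms); first exact: finite_image.
move=> z /(star_near l_gt0 G_connected completion hstar fin).
case=> [->|[a ha [s [/andP[s0 s1] -> _]]]]; first by left.
right; exists a.1.1; first by exists a.
by apply: arm_map_open_edge hstar ha _; apply/andP; split; lra.
Qed.

Lemma open_open_edge e : open (open_edge e).
Proof.
rewrite openE => _ [t /= ht <-].
have h : 0 < t < l e by move: ht; rewrite in_itv.
have hstar := star_inner src tgt l_gt0 h; have r_gt0 := star_radius_gt0 hstar.
apply/nbhs_ballP; exists (inner_radius l e t / 2) => /=; first by lra.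
move=> z /(dX_ball completion); rewrite (edge_pt_inner _ _ h).
move=> /(star_near l_gt0 G_connected completion hstar (finite_set2 _ _)).
case=> [->|[a ha [s [/andP[s0 s1] -> _]]]].
  by exists t; rewrite ?edge_pt_inner.
have -> : e = a.1.1 by case: ha => ->.
by apply: arm_map_open_edge hstar ha _; apply/andP; split; lra.
Qed.

Lemma closed_closed_edge e : closed (closed_edge e).
Proof.
apply: compact_closed; first exact: completion_hausdorff completion.
rewrite /closed_edge; have -> : (fun t => iota (edge_pt e t)) = arm_map (e, 0, 1).
  by apply/funext => t; rewrite /arm_map /arm_pt /= add0r mul1r.
by apply: (compact_arm_segment l_gt0 completion); left.
Qed.

Lemma open_edge_sub_closed e : open_edge e `<=` closed_edge e.
Proof.
move=> _ [t /= ht <-]; exists t => //; move: ht.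
by rewrite !in_itv /= => /andP[? ?]; apply/andP; split; apply: ltW.
Qed.

Lemma closed_edge_ends e z : closed_edge e z ->
  [\/ z = iota (inl (src e)), z = iota (inl (tgt e)) | open_edge e z].
Proof.
case=> t ht <-; move: ht; rewrite /= in_itv /= => /andP[t0 t1].
case: (ltrgt0P t) => [t_gt0|t_lt0|->]; last by apply: Or31; rewrite edge_pt0.
- case: (ltgtP t (l e)) => [tl|lt|->]; last by apply: Or32; rewrite edge_pt_len.
  + by apply: Or33; exists t; rewrite //= in_itv /= t_gt0.
  + by exfalso; lra.
- by exfalso; lra.
Qed.

Lemma weak_cut_at_point (p : gp) y : iota p <> y -> weak_cut (iota p) y.
Proof.
move=> /(dX_gt0 completion) py_gt0.
have [r [d [arms [hstar fin]]]] := star_exists l_gt0 locally_finite p.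
have r_gt0 := star_radius_gt0 hstar.
pose rho := Num.min (r / 4) (dX (iota p) y / 2).
have rho_gt0 : 0 < rho by rewrite lt_min; apply/andP; split; lra.
have rho_r : rho < r / 2 by rewrite /rho; case_min; lra.
have rho_y : rho < dX (iota p) y by rewrite /rho; case_min; lra.
(* The cut points: the arms' points at distance rho from p. *)
have armsW a : arms a -> dX (iota p) (arm_map a rho) = rho.
  move=> ha; rewrite (dX_sym completion) (dX_iota completion).
  rewrite (gdist_arm_pt l_gt0 hstar G_connected ha) //.
  by apply/andP; split; lra.
exists ((arm_pt ^~ rho) @` arms), [set z | dX (iota p) z < rho],
  [set z | rho < dX (iota p) z]; split.
- exact: finite_image.
- by split; [apply: (open_dX_lt completion) | apply: (open_dX_gt completion)].
- by apply/seteqP; split=> // z [/= ? ?]; exfalso; lra.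
- by split=> //=; rewrite (dX_xx completion).
apply/seteqP; split=> z /=; last first.
  by move=> hz [_ [a ha <-] az]; rewrite -az armsW // in hz; case: hz; lra.
move=> nW; case: (ltgtP (dX (iota p) z) rho) => [|//|pz]; [by left | by right |].
have pz_r : dX (iota p) z < r / 2 by rewrite pz.
have [zp|[a ha [s [_ za ps]]]] := star_near l_gt0 G_connected completion hstar fin pz_r.
  by move: pz; rewrite zp (dX_xx completion); lra.
by exfalso; apply: nW; exists (arm_pt a rho); [exists a | rewrite za -ps pz].
Qed.

Lemma edge_pt_interior e t : 0 < t < l e -> G_int l B (edge_pt e t).
Proof. by move=> h; rewrite (edge_pt_inner _ _ h) => v _. Qed.

Lemma open_edge_interior e : open_edge e `<=` iota @` G_int l B.
Proof.
move=> _ [t ht <-]; exists (edge_pt e t) => //; apply: edge_pt_interior.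
by move: ht; rewrite /= in_itv.
Qed.

Lemma open_interior : open (iota @` G_int l B).
Proof.
rewrite openE => _ [p hp <-]; have [eps eps_gt0 [Es _ near]] := near_open_edges p.
apply/nbhs_ballP; exists eps => // w /(dX_ball completion) /near.
by case=> [->|[e _ /open_edge_interior //]]; exists p.
Qed.

Lemma boundary_vertex_isolated v : exists2 eps, 0 < eps &
  forall z, bdry z -> dX (iota (inl v)) z < eps -> z = iota (inl v).
Proof.
have [eps eps_gt0 [Es _ near]] := near_open_edges (inl v).
exists eps => // z bz /near [//|[e _ /open_edge_interior]].
by move/bz.
Qed.

Lemma connected_boundary_point C w : connected C -> C `<=` bdry -> C (iota w) ->
  C = [set iota w].
Proof.
move=> Cc Cb Cw.
have [v [Bv wv]] : exists v, B v /\ w = inl v.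
  apply: contrapT => nv; apply: (Cb _ Cw); exists w => // u Bu wu.
  by apply: nv; exists u.
subst w; have [eps eps_gt0 isolated] := boundary_vertex_isolated v.
apply/esym/Cc; first by exists (iota (inl v)).
  exists [set z | dX (iota (inl v)) z < eps]; first exact: (open_dX_lt completion).
  apply/seteqP; split=> [z ->|z [Cz vz]]; last exact: isolated (Cb _ Cz) vz.
  by split=> //=; rewrite (dX_xx completion).
exists [set iota (inl v)]; first by apply: (finite_set_closed completion); exact: finite_set1.
by apply/seteqP; split=> [z ->|z []].
Qed.

Lemma weakly_connected_totally_disconnected :
  weakly_connected iota -> totally_disconnected bdry.
Proof.
move=> wc x bx; apply/seteqP; split; last by move=> _ ->; exact: connected_component_refl.
move=> y [C [Cx Cb Cc] Cy]; apply: contrapT => /eqP; rewrite eq_sym => /eqP xy.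
have [W [Ux [Uy [_ [oUx oUy] dU [Ux_x Uy_y] cov]]]] := wc x y xy.
(* C avoids the cut set W, as a connected subset of the boundary through a
   point of G is a single point. *)
have CU z : C z -> (Ux `|` Uy) z.
  move=> Cz; rewrite -cov => -[w _ wz]; subst z.
  have CE := connected_boundary_point Cc Cb Cz.
  by apply: xy; move: Cx Cy; rewrite CE => -> ->.
have CUx : C `&` Ux = C.
  apply: Cc; first by exists x.
    by exists Ux.
  exists (~` Uy); first exact: open_closedC.
  apply/seteqP; split=> z [Cz zU]; split=> //.
    by move: dU => /disjoints_subset /(_ z zU).
  by case: (CU z Cz).
have [_ Ux_y] : (C `&` Ux) y by rewrite CUx.
by move: dU => /disjoints_subset /(_ y Ux_y).
Qed.

(* The closed edges of EF are removed from Q1 and their open parts joined to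
   Q2; what is left uncovered is the finite set of their end points and of Ps. *)
Lemma weak_cut_of_cover (Q1 Q2 : set X) (Ps : set gp) (EF : set E) x y :
  open Q1 -> open Q2 -> Q1 `&` Q2 = set0 -> finite_set Ps -> finite_set EF ->
  ~` (Q1 `|` Q2) `<=` iota @` Ps `|` \bigcup_(e in EF) open_edge e ->
  Q1 x -> Q2 y -> ~ range iota x -> ~ range iota y -> weak_cut x y.
Proof.
move=> oQ1 oQ2 /disjoints_subset dQ fPs fEF cover Q1x Q2y nx ny.
pose Cl := \bigcup_(e in EF) closed_edge e.
pose W := Ps `|` (fun e => inl (src e)) @` EF `|` (fun e => inl (tgt e)) @` EF.
have fW : finite_set W.
  by rewrite !finite_setU; split; [split|]; [|exact: finite_image..].
have cCl : closed Cl.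
  by apply: (@closed_bigcup _ {classic E}) => // e _; exact: closed_closed_edge.
have cIW : closed (iota @` W) by apply: (finite_set_closed completion); exact: finite_image.
have nCl z : ~ range iota z -> ~ Cl z.
  by move=> nz [e _ [t _ tz]]; apply: nz; exists (edge_pt e t).
have nIW z : ~ range iota z -> ~ (iota @` W) z by move=> nz [w _ wz]; apply: nz; exists w.
exists W, (Q1 `&` ~` Cl `&` ~` (iota @` W)),
  ((Q2 `&` ~` Cl `|` \bigcup_(e in EF) open_edge e) `&` ~` (iota @` W)); split=> //.
- split; apply: openI; try exact: closed_openC.
    by apply: openI; [|exact: closed_openC].
  apply: openU; first by apply: openI; [|exact: closed_openC].
  by apply: bigcup_open => e _; exact: open_open_edge.
- apply/seteqP; split=> // z [[[/dQ nQ2z nClz] _] [[[Q2z _]|[e EFe ez]] _]] //.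
  by apply: nClz; exists e => //; apply: open_edge_sub_closed.
- split.
  + by split; [split|]; [|apply: nCl|apply: nIW].
  + by split; [left; split|]; [|apply: nCl|apply: nIW].
apply/seteqP; split=> z; last by case=> -[].
move=> nWz; case: (pselect (Cl z)) => [[e EFe]|nClz].
  case/closed_edge_ends => [zs|zt|ez]; last by right; split=> //; right; exists e.
    by exfalso; apply: nWz; exists (inl (src e)); [left; right; exists e|].
  by exfalso; apply: nWz; exists (inl (tgt e)); [right; exists e|].
case: (pselect (Q1 z)) => [Q1z|nQ1z]; first by left.
case: (pselect (Q2 z)) => [Q2z|nQ2z]; first by right; split=> //; left.
have Kz : (~` (Q1 `|` Q2)) z by case.
case: (cover z Kz) => [[p Psp pz]|[e EFe ez]].
  by exfalso; apply: nWz; exists p => //; left; left.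
by exfalso; apply: nClz; exists e => //; apply: open_edge_sub_closed.
Qed.

Lemma compact_sub_points_edges (K : set X) : compact K -> K `<=` range iota ->
  exists2 Ps : set gp, finite_set Ps & exists2 EF : set E, finite_set EF &
    K `<=` iota @` Ps `|` \bigcup_(e in EF) open_edge e.
Proof.
move=> cK Kiota.
pose covered (A : set X) := exists2 Ps : set gp, finite_set Ps &
  exists2 EF : set E, finite_set EF & A `<=` iota @` Ps `|` \bigcup_(e in EF) open_edge e.
have covered0 : covered set0 by exists set0 => //; exists set0.
have coveredU A A' : covered A -> covered A' -> covered (A `|` A').
  move=> [Ps fPs [EF fEF AP]] [Ps' fPs' [EF' fEF' AP']].
  exists (Ps `|` Ps'); first by rewrite finite_setU.
  exists (EF `|` EF'); first by rewrite finite_setU.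
  move=> z [/AP|/AP'] [[p Pp <-]|[e EFe ez]].
  - by left; exists p => //; left.
  - by right; exists e => //; left.
  - by left; exists p => //; right.
  - by right; exists e => //; right.
have coveredloc z : K z -> exists2 A, covered A & nbhs z A.
  move=> /Kiota [p _ <-]; have [eps eps_gt0 [Es fEs near]] := near_open_edges p.
  exists [set w | dX (iota p) w < eps]; last first.
    by apply/nbhs_ballP; exists eps => // w /(dX_ball completion).
  exists [set p]; first exact: finite_set1.
  by exists Es => // w /near [->|[e Ese ew]]; [left; exists p | right; exists e].
by have [A [Ps fPs [EF fEF AP]] KA] := compact_local_union cK covered0 coveredU coveredloc;
  exists Ps => //; exists EF => // z /KA /AP.
Qed.

Hypothesis X_compact : compact [set: X].

Lemma boundary_weak_cut x y : totally_disconnected bdry ->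
  ~ range iota x -> ~ range iota y -> x <> y -> weak_cut x y.
Proof.
move=> td nx ny xy.
have bdry_closed : closed bdry by apply: open_closedC; exact: open_interior.
have bx : bdry x by move=> [p _ px]; apply: nx; exists p.
have by' : bdry y by move=> [p _ py]; apply: ny; exists p.
have [Q1 [Q2 [oQ1 oQ2 dQ SQ [Q1x Q2y]]]] := totally_disconnected_separation
  (completion_hausdorff completion) X_compact bdry_closed td bx by' xy.
have cK : compact (~` (Q1 `|` Q2)).
  by apply: (subclosed_compact _ X_compact) => //; apply/open_closedC/openU.
have Kiota : ~` (Q1 `|` Q2) `<=` range iota.
  by move=> z Kz; apply: contrapT => nz; apply/Kz/SQ => -[p _ pz]; apply: nz; exists p.
have [Ps fPs [EF fEF cover]] := compact_sub_points_edges cK Kiota.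
exact: weak_cut_of_cover oQ1 oQ2 dQ fPs fEF cover Q1x Q2y nx ny.
Qed.

Lemma totally_disconnected_weakly_connected :
  totally_disconnected bdry -> weakly_connected iota.
Proof.
move=> td x y xy.
have [[p _ px]|nx] := pselect (range iota x).
  by rewrite -px; apply: weak_cut_at_point; rewrite px.
have [[q _ qy]|ny] := pselect (range iota y); last exact: boundary_weak_cut.
by apply: weak_cut_sym; rewrite -qy; apply: weak_cut_at_point; rewrite qy => /esym.
Qed.

End Boundary.

Theorem theorem2p5 (R : realType) (V E : Type) (src tgt : E -> V) (l : E -> R)
  (B : set V)
  (hV : countable [set: V]) (hE : countable [set: E])
  (hl : forall e, 0 < l e)
  (hlocfin : forall v, finite_set [set e | incident src tgt e v])
  (hconn : graph_connected src tgt)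
  (hB : forall v, deg1 src tgt v -> B v)
  (X : completePseudoMetricType R) (dX : X -> X -> R)
  (iota : gpoint V l -> X)
  (hcompl : is_metric_completion (gdist src tgt l) dX iota)
  (hcpt : compact [set: X]) :
  totally_disconnected (bdry_bar (G_int l B) iota) <-> weakly_connected iota.
Proof.
split.
  exact: (totally_disconnected_weakly_connected (B := B) hl hlocfin hconn hcompl hcpt).
exact: (weakly_connected_totally_disconnected (B := B) hl hlocfin hconn hcompl).
Qed.
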